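(* Let $s>1$, $\zeta(s)=\sum_{k=1}^\infty k^{-s}$, let $a_k=\frac{k^{-s}}{\zeta(s)}$ ($k\in\mathbb{N}$), and let $K$ be the associated generalized Cantor set. Then there are constants $c_1,c_2>0$ such that $$\frac{c_1}{(\ln(e/t))^{s-1}}\le |K(t)|\le \frac{c_2}{(\ln(e/t))^{s-1}}\quad\text{for all } t\in(0,1].$$
   Context: Generalized Cantor set for positive $(a_k)$ with $\sum a_k=1$: $K_0=[0,1]$; recursively $K_n$ is obtained from $K_{n-1}$ (a union of $2^{n-1}$ disjoint closed intervals) by removing from each of its intervals the open centered subinterval of length $a_n2^{-(n-1)}$; $K=\bigcap_n K_n$. For $t>0$, $K(t)=\{x\in\mathbb{R}:\operatorname{dist}(x,K)<t\}$ and $|\cdot|$ is Lebesgue measure. *)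

From mathcomp Require Import all_boot all_order all_algebra.
From mathcomp Require Import all_classical all_reals all_analysis.
Import Order.TTheory GRing.Theory Num.Theory.
Local Open Scope ring_scope.
Local Open Scope classical_set_scope.

(* The closed intervals [J.1, J.2] whose union is K_n, for the sequence
   (a k)_{k >= 1} (the value a 0 is never used). *)
Fixpoint cantor_intervals {R : realType} (a : nat -> R) (n : nat)
  : seq (R * R) :=
  match n with
  | 0 => [:: (0, 1)]
  | m.+1 =>
      flatten [seq (let c := (J.1 + J.2) / 2 in
                    let h := a m.+1 / 2 ^+ m / 2 in
                    [:: (J.1, c - h); (c + h, J.2)])
              | J <- cantor_intervals a m]
  end.

Definition cantor_stage {R : realType} (a : nat -> R) (n : nat) : set R :=
  [set x | exists2 J, J \in cantor_intervals a n & J.1 <= x <= J.2].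

Definition cantor_set {R : realType} (a : nat -> R) : set R :=
  \bigcap_n cantor_stage a n.

Definition nbhd_set {R : realType} (K : set R) (t : R) : set R :=
  [set x | exists2 y, K y & `|x - y| < t].

Definition zeta {R : realType} (s : R) : R :=
  limn (fun n : nat => \sum_(1 <= k < n) (k%:R `^ (- s))).

Definition zeta_seq {R : realType} (s : R) (k : nat) : R :=
  k%:R `^ (- s) / zeta s.

From mathcomp Require Import all_boot all_order all_algebra.
From mathcomp Require Import all_classical all_reals all_analysis.
From mathcomp Require Import ring lra.
Import Order.TTheory GRing.Theory Num.Theory.
Import numFieldNormedType.Exports.
Local Open Scope ring_scope.
Local Open Scope classical_set_scope.

(* The argument has three layers.
   - Cantor stages, for an arbitrary sequence a with a_k >= 0 and
     T_n = 1 - (a_1 + ... + a_n) >= 0: the stage K_n is a union of 2^n closed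
     intervals of common length T_n / 2^n whose left endpoints lie in K, and
     |K_n| >= T_n since K_n \ K_{n+1} is covered by gaps of total length
     a_{n+1}.  Hence |K(t)| >= T_n as soon as T_n / 2^n < t, while always
     |K(t)| <= T_n + 2^{n+1} t (enlarge each interval of K_n by t).
   - Zeta tails: for the zeta sequence T_n = r_n / zeta(s) with
     r_n = sum_{k > n} k^{-s}, and n (2n)^{-s} <= r_n <= n^{1-s} / (s-1), the
     upper bound by comparison with the integral of x^{-s}.
   - Scales: for t in (0, 1] pick m with 2^m t <= 1 < 2^{m+1} t, so that
     (m+1) ln 2 <= ln(e/t) <= m + 2.  The lower bound uses n = m + 1, the
     upper bound n = floor(m/2), for which 4^n t <= 1 and 2^{-n} is
     negligible against n^{1-s}. *)

Section LebesgueOuterMeasure.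
Context {R : realType}.
Local Notation mu := (@lebesgue_measure R).

(* Lebesgue measure is the outer measure of its construction, so it is
   monotone and subadditive on arbitrary (not necessarily measurable) sets. *)
Lemma lebesgue_le {A B : set R} : A `<=` B -> (mu A <= mu B)%E.
Proof.
by rewrite /lebesgue_measure /lebesgue_stieltjes_measure /measure_extension => AB;
  apply: le_mu_ext.
Qed.

Lemma lebesgue_setU_le (A B : set R) : (mu (A `|` B) <= mu A + mu B)%E.
Proof.
rewrite /lebesgue_measure /lebesgue_stieltjes_measure /measure_extension.
exact: outer_measureU2.
Qed.

Lemma lebesgue_union_seq_le {T : eqType} (l : seq T) (f : T -> set R) (c : R) :
  (forall J, J \in l -> (mu (f J) <= c%:E)%E) ->
  (mu [set y | exists2 J, J \in l & f J y] <= (c *+ size l)%:E)%E.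
Proof.
elim: l => [|x l IH] fc.
  rewrite (_ : [set y | _] = set0) ?measure0 //.
  by apply/seteqP; split => y //= [J].
have split_head : [set y | exists2 J, J \in x :: l & f J y] `<=`
    f x `|` [set y | exists2 J, J \in l & f J y].
  by move=> y /= [J]; rewrite inE => /orP[/eqP->|Jl] fy; [left | right; exists J].
apply: le_trans (lebesgue_le split_head) _.
apply: le_trans (lebesgue_setU_le _ _) _; rewrite /= mulrS EFinD leeD //.
  by apply: fc; rewrite mem_head.
by apply: IH => J Jl; apply: fc; rewrite inE Jl orbT.
Qed.

Lemma lebesgue_itv_cc (x y : R) : x <= y -> mu `[x, y] = (y - x)%:E.
Proof.
move=> xy; rewrite lebesgue_measure_itv /=; case: ifPn => //.
rewrite lte_fin -leNgt => yx.
have -> : x = y by apply/eqP; rewrite eq_le xy.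
by rewrite subrr.
Qed.

End LebesgueOuterMeasure.

Section CantorStages.
Context {R : realType}.
Variable a : nat -> R.
Local Notation mu := (@lebesgue_measure R).
Local Notation intervals := (cantor_intervals a).

Definition cantor_rest (n : nat) : R := 1 - \sum_(1 <= k < n.+1) a k.

Definition gap_radius (n : nat) : R := a n.+1 / 2 ^+ n / 2.
Definition midpoint (J : R * R) : R := (J.1 + J.2) / 2.
Definition left_child (n : nat) (J : R * R) : R * R :=
  (J.1, midpoint J - gap_radius n).
Definition right_child (n : nat) (J : R * R) : R * R :=
  (midpoint J + gap_radius n, J.2).

Lemma cantor_intervalsS n : intervals n.+1 =
  flatten [seq [:: left_child n J; right_child n J] | J <- intervals n].
Proof. by []. Qed.

Lemma size_cantor_intervals n : size (intervals n) = (2 ^ n)%N.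
Proof.
elim: n => // n IH; rewrite cantor_intervalsS expnS -IH.
by elim: (intervals n) => //= J l ->; rewrite mulnS.
Qed.

Lemma cantor_intervalsSP n J' : J' \in intervals n.+1 ->
  exists2 J, J \in intervals n & J' = left_child n J \/ J' = right_child n J.
Proof.
rewrite cantor_intervalsS => /flattenP [l /mapP [J JI ->]].
by rewrite !inE => /orP[|] /eqP->; exists J => //; [left | right].
Qed.

Lemma children_in {n : nat} {J : R * R} : J \in intervals n ->
  left_child n J \in intervals n.+1 /\ right_child n J \in intervals n.+1.
Proof.
move=> JI; rewrite cantor_intervalsS.
by split; apply/flattenP; exists [:: left_child n J; right_child n J];
  rewrite ?inE ?eqxx ?orbT //; apply/mapP; exists J.
Qed.

Lemma cantor_rest0 : cantor_rest 0 = 1.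
Proof. by rewrite /cantor_rest big_geq // subr0. Qed.

Lemma cantor_restS n : cantor_rest n.+1 = cantor_rest n - a n.+1.
Proof. by rewrite /cantor_rest big_nat_recr //= opprD addrA. Qed.

Lemma cantor_interval_length {n : nat} {J : R * R} : J \in intervals n ->
  J.2 - J.1 = cantor_rest n / 2 ^+ n.
Proof.
elim: n J => [|n IH] J'.
  by rewrite inE => /eqP -> /=; rewrite cantor_rest0 expr0 divr1 subr0.
move=> /cantor_intervalsSP [J /IH lenJ [|] ->];
  rewrite /= /midpoint /gap_radius cantor_restS exprS;
  have -> : J.2 = J.1 + cantor_rest n / 2 ^+ n by rewrite -lenJ addrC subrK.
all: by field; rewrite expf_neq0.
Qed.

(* From now on the construction is well defined: the a_k are nonnegative and
   the removed gaps never exceed the available length. *)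
Hypothesis a_ge0 : forall k, 0 <= a k.
Hypothesis rest_ge0 : forall n, 0 <= cantor_rest n.

Lemma cantor_interval_le {n : nat} {J : R * R} : J \in intervals n -> J.1 <= J.2.
Proof.
by move=> /cantor_interval_length lenJ; rewrite -subr_ge0 lenJ divr_ge0 ?exprn_ge0.
Qed.

Lemma gap_radius_ge0 n : 0 <= gap_radius n.
Proof. by rewrite !divr_ge0 ?exprn_ge0. Qed.

Lemma cantor_stage_succ n : cantor_stage a n.+1 `<=` cantor_stage a n.
Proof.
move=> x [J' /cantor_intervalsSP [J JI [|] ->]] /andP [xl xr]; exists J => //;
  have := cantor_interval_le JI; have := gap_radius_ge0 n;
  rewrite /= /midpoint in xl xr *; move=> *; apply/andP; split; lra.
Qed.

Lemma cantor_stage_antitone {m n : nat} : (m <= n)%N ->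
  cantor_stage a n `<=` cantor_stage a m.
Proof.
move=> mn; rewrite -(subnK mn); elim: (n - m)%N => // k IH x.
by move/cantor_stage_succ/IH.
Qed.

(* The left endpoint of an interval of K_n is the left endpoint of its
   leftmost descendant at every later stage, hence it lies in K. *)
Lemma left_endpoint_in_cantor {n : nat} {J : R * R} : J \in intervals n -> cantor_set a J.1.
Proof.
move=> JI m _; have [mn|nm] := leqP m n.
  by apply: (cantor_stage_antitone mn); exists J; rewrite // lexx (cantor_interval_le JI).
have [J' J'I <-] : exists2 J', J' \in intervals m & J'.1 = J.1.
  rewrite -(subnK (ltnW nm)); elim: (m - n)%N => [|k [J' J'I J'1]]; first by exists J.
  by exists (left_child (k + n) J'); first exact: (children_in J'I).1.
by exists J'; rewrite // lexx (cantor_interval_le J'I).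
Qed.

Definition gap (n : nat) (J : R * R) : set R :=
  `]midpoint J - gap_radius n, midpoint J + gap_radius n[.
Definition gaps (n : nat) : set R :=
  [set x | exists2 J, J \in intervals n & gap n J x].

Lemma cantor_stage_split n : cantor_stage a n `<=` cantor_stage a n.+1 `|` gaps n.
Proof.
move=> x [J JI /andP[xl xr]]; have [JlI JrI] := children_in JI.
have [x_left|] := leP x (midpoint J - gap_radius n).
  by left; exists (left_child n J); rewrite //= xl x_left.
have [x_right _|x_right gap_left] := leP (midpoint J + gap_radius n) x.
  by left; exists (right_child n J); rewrite //= xr x_right.
by right; exists J; rewrite // /gap /= in_itv /= gap_left x_right.
Qed.

Lemma gaps_measure n : (mu (gaps n) <= (a n.+1)%:E)%E.
Proof.
apply: le_trans (lebesgue_union_seq_le _ (gap n) (gap_radius n *+ 2) _) _.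
  move=> J _; have gap_sub : gap n J `<=`
      `[midpoint J - gap_radius n, midpoint J + gap_radius n].
    by move=> x; apply: subset_itv_oo_cc.
  apply: le_trans (lebesgue_le gap_sub) _.
  by rewrite lebesgue_itv_cc; [rewrite lee_fin; lra | have := gap_radius_ge0 n; lra].
rewrite size_cantor_intervals lee_fin -mulrnA -mulr_natr natrM natrX le_eqVlt.
by apply/orP; left; apply/eqP; rewrite /gap_radius; field; rewrite expf_neq0.
Qed.

(* |K_n| >= T_n: each step removes a set of measure at most a_{n+1}. *)
Lemma cantor_stage_measure n : ((cantor_rest n)%:E <= mu (cantor_stage a n))%E.
Proof.
elim: n => [|n IH].
  have K0 : `[0, 1] `<=` cantor_stage a 0.
    by move=> x /=; rewrite in_itv /= => x01; exists (0, 1); rewrite ?inE.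
  by apply: le_trans _ (lebesgue_le K0); rewrite lebesgue_itv_cc // subr0 cantor_rest0.
rewrite cantor_restS EFinB leeBlDr //; apply: le_trans IH _.
apply: le_trans (lebesgue_le (cantor_stage_split n)) _.
by apply: le_trans (lebesgue_setU_le _ _) _; rewrite leeD2l // gaps_measure.
Qed.

(* Upper bound: K(t) is covered by the 2^n intervals of K_n enlarged by t on
   each side. *)
Lemma nbhd_measure_upper n t : 0 <= t ->
  (mu (nbhd_set (cantor_set a) t) <= (cantor_rest n + 2 ^+ n.+1 * t)%:E)%E.
Proof.
move=> t0; have cover : nbhd_set (cantor_set a) t `<=`
    [set y | exists2 J, J \in intervals n & `[J.1 - t, J.2 + t] y].
  move=> x [y Ky]; rewrite ltr_distl => /andP[xl xr].
  have [J JI /andP[yl yr]] := Ky n I.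
  by exists J => //=; rewrite in_itv /=; apply/andP; split; lra.
apply: le_trans (lebesgue_le cover) _.
apply: le_trans (lebesgue_union_seq_le _ (fun J : R * R => `[J.1 - t, J.2 + t])
  (cantor_rest n / 2 ^+ n + 2 * t) _) _.
  move=> J JI; have := cantor_interval_length JI; have := cantor_interval_le JI.
  by move=> *; rewrite lebesgue_itv_cc ?lee_fin; lra.
rewrite size_cantor_intervals lee_fin -(mulr_natr _ (2 ^ n)) natrX le_eqVlt.
apply/orP; left.
by apply/eqP; rewrite exprS; field; rewrite expf_neq0.
Qed.

(* Lower bound: once t exceeds the common length T_n / 2^n, every point of K_n
   is within t of a left endpoint, which lies in K; so K_n is inside K(t). *)
Lemma nbhd_measure_lower n t : cantor_rest n / 2 ^+ n < t ->
  ((cantor_rest n)%:E <= mu (nbhd_set (cantor_set a) t))%E.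
Proof.
move=> lent; apply: le_trans (cantor_stage_measure n) (lebesgue_le _).
move=> x [J JI /andP[xl xr]]; exists J.1; first exact: left_endpoint_in_cantor JI.
by have := cantor_interval_length JI; rewrite ger0_norm; lra.
Qed.

End CantorStages.

Lemma ln2_gt0 {R : realType} : 0 < ln (2 : R).
Proof. by rewrite ln_gt0 // ltr1n. Qed.

Lemma powR_neg_ge {R : realType} (u p : R) : 0 < u -> 0 <= p ->
  1 + p * (1 - u) <= u `^ (- p).
Proof.
move=> u0 p0; rewrite /powR gt_eqF //; apply: le_trans (expR_ge1Dx _).
rewrite lerD2l mulNr -mulrN ler_wpM2l //.
have : ln u <= u - 1 by have := @le_ln1Dx _ (u - 1); rewrite addrCA subrr addr0; apply; lra.
lra.
Qed.

(* The increment of x^{-p} over [y - 1, y] dominates p y^{-(p+1)}; summed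
   over y this compares sum k^{-s} with the integral of x^{-s}. *)
Lemma powR_increment {R : realType} (p y : R) : 0 <= p -> 1 < y ->
  p * y `^ (- (p + 1)) <= (y - 1) `^ (- p) - y `^ (- p).
Proof.
move=> p0 y1; have y0 : 0 < y by lra.
have [yi0 yi1] : 0 < y^-1 /\ y^-1 < 1 by rewrite invr_gt0 invf_lt1.
have -> : y - 1 = y * (1 - y^-1) by rewrite mulrBr mulr1 mulfV ?gt_eqF.
rewrite powRM; [|lra|lra].
rewrite opprD powRD ?powR_inv1; [|lra|by rewrite (gt_eqF y0) implybT].
have := ler_wpM2l (powR_ge0 y (- p)) (powR_neg_ge (1 - y^-1) p ltac:(lra) p0).
rewrite opprB addrCA subrr addr0 mulrDr mulr1 mulrCA; lra.
Qed.

Lemma powR_le_expR {R : realType} (x p : R) : 0 <= x -> 0 < p ->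
  (x / p) `^ p <= expR x.
Proof.
move=> x0 p0; have -> : expR x = expR (x / p) `^ p.
  by rewrite -expRM mulrVK // unitfE gt_eqF.
have xp0 : 0 <= x / p by rewrite divr_ge0 // ltW.
apply: ge0_ler_powR; rewrite ?nnegrE ?expR_ge0 //; first exact: ltW.
by have := expR_ge1Dx (x / p); lra.
Qed.

Lemma exp2_inv_le_powR {R : realType} (p : R) (n : nat) : 0 < p -> (1 <= n)%N ->
  (2 ^+ n)^-1 <= ((ln 2 / p) `^ p)^-1 * n%:R `^ (- p).
Proof.
move=> p0 n1; have l2 := @ln2_gt0 R.
have n0 : 0 < n%:R :> R by rewrite ltr0n.
have lp : 0 < ln 2 / p by rewrite divr_gt0.
rewrite powRN -invfM.
rewrite lef_pV2 ?posrE ?exprn_gt0 ?mulr_gt0 ?powR_gt0 //.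
have -> : (2 : R) ^+ n = expR (n%:R * ln 2) by rewrite expRM_natl lnK ?posrE.
rewrite -powRM; [|exact: ltW|exact: ltW].
rewrite mulrC mulrA; apply: powR_le_expR => //.
by rewrite mulr_ge0 // ltW.
Qed.

Lemma powR_rescale_lower {R : realType} {p c x L : R} : 0 <= p -> 0 < c -> 0 < x ->
  c * x <= L -> c `^ p / L `^ p <= x `^ (- p).
Proof.
move=> p0 c0 x0 cxL; have L0 : 0 < L by apply: lt_le_trans cxL; rewrite mulr_gt0.
have cx0 : 0 <= c * x by rewrite mulr_ge0 // ltW.
have : (c * x) `^ p <= L `^ p by apply: ge0_ler_powR; rewrite // nnegrE ltW.
rewrite (powRM _ (ltW c0) (ltW x0)) powRN ler_pdivrMr ?powR_gt0 // ler_pdivlMl ?powR_gt0 //.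
by rewrite mulrC.
Qed.

Lemma powR_rescale_upper {R : realType} {p c x L : R} : 0 <= p -> 0 < c -> 0 < L ->
  L <= c * x -> x `^ (- p) <= c `^ p / L `^ p.
Proof.
move=> p0 c0 L0 Lcx; have x0 : 0 < x by rewrite -(pmulr_rgt0 _ c0) (lt_le_trans L0).
have cx0 : 0 <= c * x by rewrite mulr_ge0 // ltW.
have : L `^ p <= (c * x) `^ p by apply: ge0_ler_powR; rewrite // nnegrE ltW.
rewrite (powRM _ (ltW c0) (ltW x0)) powRN ler_pdivlMr ?powR_gt0 // ler_pdivrMl ?powR_gt0 //.
by rewrite mulrC.
Qed.

Lemma dyadic_scale {R : realType} {t : R} : 0 < t <= 1 ->
  exists m, 2 ^+ m * t <= 1 < 2 ^+ m.+1 * t.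
Proof.
move=> /andP[t0 t1].
have exP : exists m, 1 < 2 ^+ m * t.
  exists (Num.bound t^-1); rewrite -ltr_pdivrMr // div1r.
  have ti : 0 <= t^-1 by rewrite invr_ge0 ltW.
  apply: lt_le_trans (archi_boundP ti) _.
  by rewrite -natrX ler_nat ltnW // ltn_expl.
case: (ex_minnP exP) => [[|m]]; first by rewrite expr0 mul1r; lra.
by move=> mt minm; exists m; rewrite mt andbT leNgt; apply/negP => /minm; rewrite ltnn.
Qed.

Lemma log_dyadic_scale {R : realType} {t : R} {m : nat} : 0 < t ->
  2 ^+ m * t <= 1 < 2 ^+ m.+1 * t ->
  m.+1%:R * ln 2 <= ln (expR 1 / t) <= m%:R + 2.
Proof.
move=> t0 /andP[mt1 mt2]; have l2 := @ln2_gt0 R.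
have l21 : ln (2 : R) <= 1 by have := @le_ln1Dx R 1; apply; lra.
have lnM2 k : ln (2 ^+ k * t) = k%:R * ln 2 + ln t.
  by rewrite lnM ?posrE ?exprn_gt0 // lnXn // mulr_natl.
have := ln_le0 mt1; have := ln_gt0 mt2; rewrite !lnM2.
rewrite ln_div ?posrE ?expR_gt0 // expRK -natr1 => m1 m0.
have : m%:R * ln 2 <= m%:R :> R by rewrite ler_piMr ?ler0n.
by move=> mln; apply/andP; split; lra.
Qed.

Section ZetaCantor.
Context {R : realType}.
Variable s : R.
Hypothesis s_gt1 : 1 < s.
Local Notation a := (zeta_seq s).
Local Notation mu := (@lebesgue_measure R).
Local Notation Kt t := (nbhd_set (cantor_set (zeta_seq s)) t).

Definition zeta_partial (N : nat) : R := \sum_(1 <= k < N) k%:R `^ (- s).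

Lemma zeta_partial_split {n N : nat} : (n.+1 <= N)%N ->
  zeta_partial N = zeta_partial n.+1 + \sum_(n.+1 <= k < N) k%:R `^ (- s).
Proof. by move=> nN; rewrite /zeta_partial (@big_cat_nat _ _ _ n.+1). Qed.

Lemma zeta_partial_nondecreasing : nondecreasing_seq zeta_partial.
Proof.
move=> N M NM; case: N NM => [|N] NM.
  by rewrite {1}/zeta_partial big_geq // sumr_ge0 // => k _; apply: powR_ge0.
by rewrite (zeta_partial_split NM) lerDl sumr_ge0 // => k _; apply: powR_ge0.
Qed.

Lemma tail_sum_le n m : (1 <= n)%N ->
  (s - 1) * \sum_(n.+1 <= k < n.+1 + m) k%:R `^ (- s) <=
  n%:R `^ (- (s - 1)) - (n + m)%:R `^ (- (s - 1)).
Proof.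
move=> n1; elim: m => [|m IH]; first by rewrite big_geq ?addn0 // mulr0 subrr.
rewrite addnS big_nat_recr /= ?leq_addr // mulrDr.
have s1 : 0 <= s - 1 by rewrite subr_ge0 ltW.
have := @powR_increment _ (s - 1) (n + m).+1%:R s1.
rewrite subrK -natr1 addrK ltrDr ltr0n addn_gt0 n1 => /(_ isT).
rewrite addSn addnS -natr1; lra.
Qed.

Lemma zeta_partial_tail_le {n N : nat} : (1 <= n)%N -> (n.+1 <= N)%N ->
  (s - 1) * (zeta_partial N - zeta_partial n.+1) <= n%:R `^ (- (s - 1)).
Proof.
move=> n1 nN; rewrite (zeta_partial_split nN) (addrC (zeta_partial n.+1)) addrK.
have := tail_sum_le n (N - n.+1) n1; rewrite subnKC //.
by have := powR_ge0 (n + (N - n.+1))%:R (- (s - 1)); lra.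
Qed.

Lemma zeta_partial_cvg : cvgn zeta_partial.
Proof.
apply: nondecreasing_is_cvgn; first exact: zeta_partial_nondecreasing.
exists (1 + (s - 1)^-1) => _ [N _ <-].
apply: le_trans (zeta_partial_nondecreasing _ _ (leq_addr 2 N)) _.
have := zeta_partial_tail_le (leqnn 1) (leq_addl N 2).
rewrite powR1 /zeta_partial big_nat1 powR1 -ler_pdivlMl ?subr_gt0 // mulr1; lra.
Qed.

Lemma zeta_partial_le_zeta N : zeta_partial N <= zeta s.
Proof. exact: nondecreasing_cvgn_le zeta_partial_nondecreasing zeta_partial_cvg N. Qed.

Lemma zeta_ge1 : 1 <= zeta s.
Proof. by have := zeta_partial_le_zeta 2; rewrite /zeta_partial big_nat1 powR1. Qed.

Lemma zeta_tail_upper n : (1 <= n)%N ->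
  (s - 1) * (zeta s - zeta_partial n.+1) <= n%:R `^ (- (s - 1)).
Proof.
move=> n1; have s1 : 0 < s - 1 by rewrite subr_gt0.
rewrite mulrC -ler_pdivlMr // lerBlDl; apply: limr_le; first exact: zeta_partial_cvg.
exists n.+1 => // N /= nN; rewrite -lerBlDl ler_pdivlMr // mulrC.
exact: zeta_partial_tail_le.
Qed.

(* Lower bound on the zeta tail: its n terms k = n+1, ..., 2n are each at
   least (2n)^{-s}. *)
Lemma zeta_tail_lower n : (n.*2)%:R `^ (- s) *+ n <= zeta s - zeta_partial n.+1.
Proof.
apply: le_trans (_ : zeta_partial (n.+1 + n) - zeta_partial n.+1 <= _); last first.
  by rewrite lerD2r zeta_partial_le_zeta.
rewrite (zeta_partial_split (leq_addr _ _)) (addrC (zeta_partial n.+1)) addrK.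
rewrite -[X in _ *+ X](addKn n.+1 n) -sumr_const_nat.
apply: ler_sum_nat => k /andP[k1]; rewrite addSn ltnS => k2.
have k0 : (0 < k)%N by apply: leq_ltn_trans k1.
have n0 : (0 < n.*2)%N by rewrite -addnn (leq_trans k0 k2).
rewrite !powRN lef_pV2 ?posrE ?powR_gt0 ?ltr0n //.
apply: ge0_ler_powR; rewrite ?nnegrE ?ler0n ?ler_nat -?addnn //.
by have := s_gt1; lra.
Qed.

Lemma zeta_gt0 : 0 < zeta s.
Proof. by apply: lt_le_trans zeta_ge1. Qed.

Lemma zeta_seq_ge0 k : 0 <= a k.
Proof. by rewrite divr_ge0 ?powR_ge0 // ltW // zeta_gt0. Qed.

Lemma zeta_cantor_rest n :
  cantor_rest a n = (zeta s - zeta_partial n.+1) / zeta s.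
Proof.
rewrite /cantor_rest /zeta_seq -mulr_suml /zeta_partial.
by field; rewrite gt_eqF // zeta_gt0.
Qed.

Lemma zeta_cantor_rest_ge0 n : 0 <= cantor_rest a n.
Proof.
rewrite zeta_cantor_rest divr_ge0 ?(ltW zeta_gt0) //.
by apply: le_trans (zeta_tail_lower n); rewrite mulrn_wge0 ?powR_ge0.
Qed.

Lemma zeta_cantor_rest_le1 n : cantor_rest a n <= 1.
Proof.
rewrite zeta_cantor_rest ler_pdivrMr ?zeta_gt0 // mul1r gerBl.
by rewrite sumr_ge0 // => k _; rewrite powR_ge0.
Qed.

Lemma nbhd_lower_dyadic {M : nat} {t : R} : 1 < 2 ^+ M * t ->
  (((M.*2)%:R `^ (- s) *+ M / zeta s)%:E <= mu (Kt t))%E.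
Proof.
move=> Mt; apply: le_trans _ (nbhd_measure_lower _ zeta_seq_ge0 zeta_cantor_rest_ge0 M t _).
  rewrite lee_fin zeta_cantor_rest ler_wpM2r ?zeta_tail_lower //.
  by rewrite invr_ge0 ltW // zeta_gt0.
rewrite ltr_pdivrMr ?exprn_gt0 // mulrC; have := zeta_cantor_rest_le1 M; lra.
Qed.

Definition upper_const : R :=
  ((s - 1) * zeta s)^-1 + 2 * ((ln 2 / (s - 1)) `^ (s - 1))^-1.

Lemma upper_const_gt0 : 0 < upper_const.
Proof.
have p0 : 0 < s - 1 by rewrite subr_gt0.
have l2 := @ln2_gt0 R.
by rewrite addr_gt0 ?mulr_gt0 ?invr_gt0 ?mulr_gt0 ?powR_gt0 ?divr_gt0 ?zeta_gt0.
Qed.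

Lemma nbhd_upper_dyadic {n : nat} {t : R} : (1 <= n)%N -> 0 <= t -> 2 ^+ n.*2 * t <= 1 ->
  (mu (Kt t) <= (upper_const * n%:R `^ (- (s - 1)))%:E)%E.
Proof.
move=> n1 t0 nt; have z0 := zeta_gt0; have p0 : 0 < s - 1 by rewrite subr_gt0.
apply: le_trans (nbhd_measure_upper _ zeta_cantor_rest_ge0 n t t0) _.
have rest_le : cantor_rest a n <= ((s - 1) * zeta s)^-1 * n%:R `^ (- (s - 1)).
  rewrite zeta_cantor_rest invfM mulrAC ler_pM2r ?invr_gt0 // ler_pdivlMl //.
  exact: zeta_tail_upper.
have fat_le : 2 ^+ n.+1 * t <= 2 * ((ln 2 / (s - 1)) `^ (s - 1))^-1 * n%:R `^ (- (s - 1)).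
  have fat_inv : 2 ^+ n.+1 * t <= 2 * (2 ^+ n)^-1.
    rewrite exprS -mulrA ler_pM2l // -[(2 ^+ n)^-1]mulr1 ler_pdivlMl ?exprn_gt0 //.
    by rewrite mulrA -exprD addnn.
  rewrite -mulrA; apply: le_trans fat_inv _; rewrite ler_pM2l //.
  exact: exp2_inv_le_powR.
by rewrite lee_fin /upper_const mulrDl; lra.
Qed.

Lemma nbhd_le3 {t : R} : 0 < t <= 1 -> (mu (Kt t) <= 3%:E)%E.
Proof.
move=> /andP[t0 t1].
apply: le_trans (nbhd_measure_upper _ zeta_cantor_rest_ge0 0 t (ltW t0)) _.
by rewrite lee_fin cantor_rest0 expr1; lra.
Qed.

Definition lower_const : R := 2 `^ (- s) / zeta s * ln 2 `^ (s - 1).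
Definition log_upper_const : R := 3 * 3 `^ (s - 1) + upper_const * 5 `^ (s - 1).

Lemma lower_const_gt0 : 0 < lower_const.
Proof. by rewrite !mulr_gt0 ?powR_gt0 ?invr_gt0 ?zeta_gt0 ?ln2_gt0. Qed.

Lemma log_upper_const_gt0 : 0 < log_upper_const.
Proof. by rewrite addr_gt0 ?mulr_gt0 ?powR_gt0 ?upper_const_gt0. Qed.

Lemma nbhd_lower_log {M : nat} {t : R} : (1 <= M)%N -> 1 < 2 ^+ M * t ->
  M%:R * ln 2 <= ln (expR 1 / t) ->
  ((lower_const / ln (expR 1 / t) `^ (s - 1))%:E <= mu (Kt t))%E.
Proof.
move=> M1 Mt ML; apply: le_trans _ (nbhd_lower_dyadic Mt); rewrite lee_fin.
have M0 : 0 < M%:R :> R by rewrite ltr0n.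
have MsM : M%:R `^ (- s) * M%:R = M%:R `^ (- (s - 1)) :> R.
  rewrite opprB addrC powRD ?powRr1 ?ler0n //.
  by rewrite (gt_eqF M0) implybT.
have -> : (M.*2)%:R `^ (- s) *+ M / zeta s =
    2 `^ (- s) / zeta s * (M%:R `^ (- s) * M%:R).
  by rewrite -mulr_natr -muln2 natrM powRM ?ler0n //; ring.
rewrite MsM /lower_const -mulrA ler_wpM2l ?divr_ge0 ?powR_ge0 ?(ltW zeta_gt0) //.
by apply: powR_rescale_lower; rewrite ?subr_ge0 ?(ltW s_gt1) ?ln2_gt0 // (mulrC (ln 2)).
Qed.

(* Upper bound in terms of L: if 2^m t <= 1 and L <= m + 2, take n = m / 2.
   For n = 0, L <= 3 and |K(t)| <= 3; otherwise 4^n t <= 1, L <= 5n and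
   |K(t)| <= C n^{1-s} <= C 5^{s-1} / L^{s-1}. *)
Lemma nbhd_upper_log {m : nat} {t : R} : 0 < t <= 1 -> 2 ^+ m * t <= 1 ->
  0 < ln (expR 1 / t) <= m%:R + 2 ->
  (mu (Kt t) <= (log_upper_const / ln (expR 1 / t) `^ (s - 1))%:E)%E.
Proof.
move=> t01 mt /andP[L0 Lm]; set L := ln (expR 1 / t) in L0 Lm *.
have [t0 _] := andP t01; have p0 : 0 <= s - 1 by rewrite subr_ge0 ltW.
have Lp0 : 0 < L `^ (s - 1) by rewrite powR_gt0.
rewrite /log_upper_const mulrDl -!mulrA.
have [c3 c5] : 0 <= 3 * (3 `^ (s - 1) / L `^ (s - 1)) /\
    0 <= upper_const * (5 `^ (s - 1) / L `^ (s - 1)).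
  by split; rewrite !mulr_ge0 ?powR_ge0 ?invr_ge0 ?(ltW Lp0) ?(ltW upper_const_gt0).
have m_le : m%:R <= 2 * (m./2)%:R + 1 :> R.
  have : (m <= m./2.*2 + 1)%N by rewrite -{1}(odd_double_half m) addnC leq_add2l leq_b1.
  by rewrite -(ler_nat R) natrD -muln2 natrM mulrC.
have [n0|n1] := posnP m./2.
  have L3 : L <= 3 * 1 by move: m_le; rewrite n0; lra.
  have := powR_rescale_upper p0 (_ : 0 < 3) L0 L3; rewrite powR1 => /(_ ltac:(lra)) L3p.
  by apply: le_trans (nbhd_le3 t01) _; rewrite lee_fin; lra.
have L5 : L <= 5 * (m./2)%:R.
  have : 1 <= (m./2)%:R :> R by rewrite ler1n.
  lra.
apply: le_trans (nbhd_upper_dyadic n1 (ltW t0) _) _.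
  apply: le_trans mt; rewrite ler_wpM2r ?(ltW t0) //.
  apply: ler_weXn2l; first lra.
  by rewrite -[X in (_ <= X)%N](odd_double_half m) leq_addl.
have := ler_wpM2l (ltW upper_const_gt0) (powR_rescale_upper p0 (_ : 0 < 5) L0 L5).
by rewrite lee_fin => /(_ ltac:(lra)); lra.
Qed.
End ZetaCantor.

Theorem lemma4p4 (R : realType) (s : R) (hs : 1 < s) :
  exists c1 c2 : R, 0 < c1 /\ 0 < c2 /\
    forall t : R, 0 < t <= 1 ->
      ((c1 / (ln (expR 1 / t)) `^ (s - 1))%:E
         <= (@lebesgue_measure R) (nbhd_set (cantor_set (zeta_seq s)) t))%E /\
      ((@lebesgue_measure R) (nbhd_set (cantor_set (zeta_seq s)) t)
         <= (c2 / (ln (expR 1 / t)) `^ (s - 1))%:E)%E.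
Proof.
exists (lower_const s), (log_upper_const s).
split; first exact: lower_const_gt0.
split; first exact: log_upper_const_gt0.
move=> t t01; have [t0 _] := andP t01.
have [m mt] := dyadic_scale t01; have [mt1 mt2] := andP mt.
have /andP[Llo Lhi] := log_dyadic_scale t0 mt.
have L0 : 0 < ln (expR 1 / t).
  by apply: lt_le_trans Llo; rewrite mulr_gt0 ?ltr0n ?ln2_gt0.
split; first exact: (nbhd_lower_log _ hs (ltn0Sn m) mt2 Llo).
by apply: (nbhd_upper_log _ hs t01 mt1); rewrite L0 Lhi.
Qed.
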